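(* Let $G$ be a countable group. Then: (1) If $\mu$ is a finitely additive left-invariant mean on $G$ with $\textup{dc}_\mu(G)=0$ then $\textup{dc}_{\mu'}(G)=0$ for every finitely additive left-invariant mean $\mu'$ on $G$. (2) If $\alpha>\frac{1}{2}$, and there is either a finitely additive left-invariant mean $\mu$ on $G$ with $\textup{dc}_\mu(G)=\alpha$ or a sequence $M$ of probability measures on $G$ that measures index uniformly with $\textup{dc}_M(G)=\alpha$, then $\textup{dc}_{\mu'}(G)=\alpha$ for every finitely additive left-invariant mean $\mu'$ on $G$ and $\textup{dc}_{M'}(G)=\alpha$ for every sequence $M'$ of probability measures on $G$ that measures index uniformly; moreover the $\limsup$ in the definition of $\textup{dc}_{M'}(G)$ is actually a limit.
   Context: A finitely additive left-invariant mean is a positive normalised left-invariant linear functional on $\ell^\infty(G)$, $\mu(X)=\int1_X\,d\mu$, and $\textup{dc}_\mu(G)=\int_x\int_y1_{\{xy=yx\}}\,d\mu(x)\,d\mu(y)$. A sequence $M=(\mu_n)$ of probability measures measures index uniformly if $\mu_n(xH)\to1/[G:H]$ uniformly over $x\in G$ and subgroups $H$ (with $1/[G:H]=0$ for infinite index); $\textup{dc}_M(G)=\limsup_n(\mu_n\times\mu_n)(\{(x,y):xy=yx\})$. *)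

From HB Require Import structures.
From mathcomp Require Import all_boot all_order all_algebra.
From mathcomp Require Import all_classical all_reals all_analysis.
From mathcomp Require Import finmap.
Set Implicit Arguments. Unset Strict Implicit. Unset Printing Implicit Defensive.
Import Order.TTheory GRing.Theory Num.Theory.
Local Open Scope classical_set_scope.
Local Open Scope ring_scope.

Section Defs.
Variables (G : choiceType) (mul : G -> G -> G) (inv : G -> G) (one : G).

Definition is_group : Prop :=
  [/\ forall x y z, mul x (mul y z) = mul (mul x y) z,
      forall x, mul one x = x &
      forall x, mul (inv x) x = one].

Definition is_subgroup (H : set G) : Prop :=
  [/\ H one, forall x y, H x -> H y -> H (mul x y) & forall x, H x -> H (inv x)].

Definition lcoset (x : G) (H : set G) : set G := [set mul x h | h in H].

Definition lcosets (H : set G) : set (set G) := [set lcoset x H | x in [set: G]].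

Variable R : realType.

(* 1/[G:H], with the convention 1/[G:H] = 0 when the index is infinite *)
Definition inv_index (H : set G) : R :=
  if `[< finite_set (lcosets H) >] then (#|` fset_set (lcosets H)|%:R)^-1 else 0.

Definition bounded_fun (f : G -> R) : Prop := exists C : R, forall x, `|f x| <= C.

(* finitely additive left-invariant mean: a positive normalised left-invariant
   linear functional on l^oo(G) (its values on unbounded functions are irrelevant) *)
Definition is_left_invariant_mean (m : (G -> R) -> R) : Prop :=
  [/\ forall (f g : G -> R) (a b : R), bounded_fun f -> bounded_fun g ->
        m (fun x => a * f x + b * g x) = a * m f + b * m g,
      forall f, bounded_fun f -> (forall x, 0 <= f x) -> 0 <= m f,
      m (fun _ => 1) = 1 &
      forall (f : G -> R) (g : G), bounded_fun f -> m (fun x => f (mul g x)) = m f].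

Definition dc_mean (m : (G -> R) -> R) : R :=
  m (fun x => m (fun y => if `[< mul x y = mul y x >] then 1 else 0)).

(* probability measures on the countable set G, given by their mass functions *)
Definition is_prob (p : G -> R) : Prop :=
  (forall x, 0 <= p x) /\ (\esum_(x in [set: G]) (p x)%:E = 1)%E.

Definition pmeas (p : G -> R) (A : set G) : \bar R := \esum_(x in A) (p x)%:E.

Definition measures_index_uniformly (M : nat -> G -> R) : Prop :=
  (forall n, is_prob (M n)) /\
  forall e : R, 0 < e -> \forall n \near \oo,
    forall (x : G) (H : set G), is_subgroup H ->
      `| fine (pmeas (M n) (lcoset x H)) - inv_index H | < e.

Definition comm_mass (M : nat -> G -> R) (n : nat) : \bar R :=
  \esum_(z in [set z : G * G | mul z.1 z.2 = mul z.2 z.1]) (M n z.1 * M n z.2)%:E.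

Definition dc_seq (M : nat -> G -> R) : \bar R := limn_esup (comm_mass M).

End Defs.

(* A left-invariant mean gives a subgroup of index k the value 1/k (and 0 if
   the index is infinite), so dc_μ(G) = μ(f) for f(x) = 1/[G:C(x)].
   (1) If μ'(f) = 2ε > 0, the set X = {f ≥ ε} has μ'-mass at least ε, so at most
   1/ε left translates of X are pairwise disjoint; a maximal such family covers G
   by finitely many translates of X X⁻¹.  As [G : C(x) ∩ C(y)] ≤ [G:C(x)] [G:C(y)]
   and C(x) ∩ C(y) ⊆ C(y x⁻¹), f ≥ ε² on X X⁻¹, so μ(f) > 0 for every mean μ.
   (2) Off the centre Z we have f ≤ 1/2, so a value above 1/2 (of a mean, or of
   the limsup along a sequence measuring index uniformly) forces [G:Z] < ∞.  Then
   f is constant on the cosets of Z, and every mean of f, as well as the limit of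
   (μ_n × μ_n){xy = yx}, equals the sum over the cosets cZ of 1/([G:C(c)] [G:Z]). *)

From Pilot Require Import Defs.
From HB Require Import structures.
From mathcomp Require Import all_boot all_order all_algebra.
From mathcomp Require Import all_classical all_reals all_analysis.
From mathcomp Require Import finmap.
From mathcomp Require Import lra.
Import Order.TTheory GRing.Theory Num.Theory.
Local Open Scope classical_set_scope.
Local Open Scope ring_scope.
Set Implicit Arguments. Unset Strict Implicit.

Lemma ge0_esumZl (R : realType) (T : choiceType) (I : set T) (a : T -> \bar R) (c : R) :
  0 <= c -> (forall i, I i -> 0 <= a i)%E ->
  (\esum_(i in I) (c%:E * a i) = c%:E * \esum_(i in I) a i)%E.
Proof.
move=> c0 a0; rewrite /esum -ereal_supZl //; last first.
  by apply/set0P; exists (\sum_(x \in set0) a x)%E; exists set0 => //; exact: fsets_set0.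
have sumZ A : fsets I A -> (\sum_(x \in A) (c%:E * a x) = c%:E * \sum_(x \in A) a x)%E.
  move=> [finA AI]; rewrite !fsbig_finite // !big_seq ge0_sume_distrr // => x.
  by rewrite in_fset_set // => /set_mem /AI /a0.
congr ereal_sup; apply/seteqP; split=> z /=.
  by move=> [A IA <-]; exists (\sum_(x \in A) a x)%E; [exists A|rewrite sumZ].
by move=> [_ [A IA <-] <-]; exists A; rewrite ?sumZ.
Qed.

Lemma sumr_const_seq (V : nmodType) (I : Type) (s : seq I) (x : V) :
  \sum_(i <- s) x = x *+ size s.
Proof. by rewrite big_const_seq count_predT iter_addr_0. Qed.

Lemma limn_esup_le_near (R : realType) (u : (\bar R)^nat) (c : \bar R) :
  (\forall n \near \oo, u n <= c)%E -> (limn_esup u <= c)%E.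
Proof.
move=> [N _ uc]; rewrite limn_esup_lim; apply: lime_le; first exact: is_cvg_esups.
exists N => // n /= Nn; apply: ge_ereal_sup => _ [k /= nk <-]; apply: uc.
exact: leq_trans Nn nk.
Qed.

(** * Expectation against a probability mass function *)

Section Expectation.
Variables (R : realType) (G : choiceType) (p : G -> R).
Hypothesis probp : is_prob p.

Local Open Scope ereal_scope.

Definition expect (h : G -> R) : \bar R := \esum_(x in [set: G]) (p x * h x)%:E.

Lemma prob_ge0 x : (0 <= p x)%R.
Proof. by case: probp. Qed.

Lemma le_expect h h' : (forall x, 0 <= h x <= h' x)%R -> expect h <= expect h'.
Proof.
move=> hh'; apply: le_esum => x _; rewrite lee_fin ler_wpM2l ?prob_ge0 //.
by case/andP: (hh' x).
Qed.

Lemma expect_ge0 h : (forall x, 0 <= h x)%R -> 0 <= expect h.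
Proof. by move=> h0; apply: esum_ge0 => x _; rewrite lee_fin mulr_ge0 ?prob_ge0. Qed.

Lemma expectZ c h : (0 <= c)%R -> (forall x, 0 <= h x)%R ->
  expect (fun x => c * h x)%R = c%:E * expect h.
Proof.
move=> c0 h0; rewrite /expect -ge0_esumZl // => [|x _]; last first.
  by rewrite lee_fin mulr_ge0 ?prob_ge0.
by apply: eq_esum => x _; rewrite -EFinM mulrCA.
Qed.

Lemma expect_cst c : (0 <= c)%R -> expect (fun=> c) = c%:E.
Proof.
move=> c0; rewrite -[c%:E]mule1 -(proj2 probp) -ge0_esumZl // => [|x _]; last first.
  by rewrite lee_fin prob_ge0.
by apply: eq_esum => x _; rewrite -EFinM mulrC.
Qed.

Lemma expectD h1 h2 : (forall x, 0 <= h1 x)%R -> (forall x, 0 <= h2 x)%R ->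
  expect (fun x => h1 x + h2 x)%R = expect h1 + expect h2.
Proof.
move=> h10 h20; rewrite /expect -esumD => [|x _|x _]; rewrite ?lee_fin ?mulr_ge0 ?prob_ge0 //.
by apply: eq_esum => x _; rewrite mulrDr EFinD.
Qed.

Lemma expect_sum (T : choiceType) (s : seq T) (F : T -> G -> R) :
  (forall i x, 0 <= F i x)%R ->
  expect (fun x => \sum_(i <- s) F i x)%R = \sum_(i <- s) expect (F i).
Proof.
move=> F0; rewrite /expect; under eq_esum do rewrite mulr_sumr -sumEFin.
by rewrite esum_sum // => x i _ _; rewrite lee_fin mulr_ge0 ?prob_ge0.
Qed.

Lemma expect_indic A : expect \1_A = pmeas p A.
Proof.
rewrite /expect /pmeas [RHS]esum_mkcond; apply: eq_esum => x _.
by rewrite indicE; case: (boolP (x \in A)); rewrite ?mulr1 ?mulr0.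
Qed.

Lemma pmeas_ge0 A : 0 <= pmeas p A.
Proof. by rewrite -expect_indic; apply: expect_ge0 => x; rewrite indicE ler0n. Qed.

Lemma pmeas_le1 A : pmeas p A <= 1.
Proof.
rewrite -expect_indic -(expect_cst ler01); apply: le_expect => x.
by rewrite indicE ler0n lern1 leq_b1.
Qed.

Lemma pmeas_fin_num A : pmeas p A \is a fin_num.
Proof. by rewrite ge0_fin_numE ?pmeas_ge0 // (le_lt_trans (pmeas_le1 A)) ?ltry. Qed.

Lemma fine_pmeas01 A : (0 <= fine (pmeas p A) <= 1)%R.
Proof. by rewrite -!lee_fin fineK ?pmeas_fin_num ?pmeas_ge0 ?pmeas_le1. Qed.

Lemma expect_fin_num h : (forall x, 0 <= h x <= 1)%R -> expect h \is a fin_num.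
Proof.
move=> h01; rewrite ge0_fin_numE; last by apply: expect_ge0 => x; case/andP: (h01 x).
by rewrite (le_lt_trans (le_expect h01)) // expect_cst ?ltry.
Qed.

End Expectation.

Section Group.
Variables (G : choiceType) (mul : G -> G -> G) (inv : G -> G) (one : G).
Hypothesis groupG : is_group mul inv one.

Local Infix "*g" := mul (at level 40, left associativity).
Local Notation subgroup := (is_subgroup mul inv one).
Local Notation lcoset := (lcoset mul).
Local Notation lcosets := (lcosets mul).

Lemma mulgA x y z : x *g (y *g z) = x *g y *g z.
Proof. by case: groupG. Qed.

Lemma mul1g x : one *g x = x.
Proof. by case: groupG. Qed.

Lemma mulVg x : inv x *g x = one.
Proof. by case: groupG. Qed.

Lemma mulgV x : x *g inv x = one.
Proof.
rewrite -[LHS]mul1g -[X in X *g _](mulVg (inv x)) -mulgA (mulgA (inv x)).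
by rewrite mulVg mul1g mulVg.
Qed.

Lemma mulg1 x : x *g one = x.
Proof. by rewrite -(mulVg x) mulgA mulgV mul1g. Qed.

Lemma mulKg x y : inv x *g (x *g y) = y.
Proof. by rewrite mulgA mulVg mul1g. Qed.

Lemma mulKVg x y : x *g (inv x *g y) = y.
Proof. by rewrite mulgA mulgV mul1g. Qed.

Lemma mulgK x y : y *g x *g inv x = y.
Proof. by rewrite -mulgA mulgV mulg1. Qed.

Lemma mulgI x : injective (mul x).
Proof. by move=> y z e; rewrite -(mulKg x y) e mulKg. Qed.

Lemma mulIg x : injective (mul^~ x).
Proof. by move=> y z /= e; rewrite -(mulgK x y) e mulgK. Qed.

Lemma invgK : involutive inv.
Proof. by move=> x; apply: (@mulgI (inv x)); rewrite mulgV mulVg. Qed.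

Lemma invMg x y : inv (x *g y) = inv y *g inv x.
Proof. by apply: (@mulgI (x *g y)); rewrite mulgV -mulgA mulKVg mulgV. Qed.

Definition cent x : set G := [set y | x *g y = y *g x].

Definition center : set G := [set z | forall y, z *g y = y *g z].

Lemma cent_subgroup x : subgroup (cent x).
Proof.
rewrite /cent; split=> [|y z /= yx zx|y /= yx]; first by rewrite /= mulg1 mul1g.
  by rewrite mulgA yx -mulgA zx mulgA.
by apply: (@mulgI y); rewrite mulKVg mulgA -yx mulgK.
Qed.

Lemma center_subgroup : subgroup center.
Proof.
rewrite /center; split=> [y|y z /= yZ zZ w|y /= yZ w]; first by rewrite /= mulg1 mul1g.
  by rewrite -mulgA zZ mulgA yZ mulgA.
by apply: (@mulgI y); rewrite mulKVg mulgA yZ mulgK.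
Qed.

Lemma centM_center x z : center z -> cent (x *g z) = cent x.
Proof.
move=> zZ; apply/seteqP; split=> y; rewrite /cent /=.
  by rewrite -mulgA zZ !mulgA => /mulIg.
by move=> xy; rewrite -mulgA zZ !mulgA xy.
Qed.

Lemma centI_sub x x' : cent x `&` cent x' `<=` cent (x' *g inv x).
Proof.
move=> y [xy x'y]; have [_ yM yV] := cent_subgroup y.
by apply/esym; apply: yM; [exact/esym|exact/yV/esym].
Qed.

Lemma lcosetP x H y : lcoset x H y <-> H (inv x *g y).
Proof.
split=> [[h Hh <-]|Hy]; first by rewrite mulKg.
by exists (inv x *g y); rewrite ?mulKVg.
Qed.

Lemma lcoset_refl H y : subgroup H -> lcoset y H y.
Proof. by case=> H1 _ _; apply/lcosetP; rewrite mulVg. Qed.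

Lemma lcoset_eq H x y : subgroup H -> lcoset x H y -> lcoset x H = lcoset y H.
Proof.
move=> [_ HM HV] /lcosetP Hy; apply/seteqP; split=> w /lcosetP Hw; apply/lcosetP.
  by have := HM _ _ (HV _ Hy) Hw; rewrite invMg invgK -mulgA mulKVg.
by have := HM _ _ Hy Hw; rewrite mulgA mulgK.
Qed.

Lemma lcoset1 H : lcoset one H = H.
Proof.
have inv1 : inv one = one by rewrite -[inv one]mulg1 mulVg.
by apply/seteqP; split=> w; rewrite lcosetP inv1 mul1g.
Qed.

Lemma lcosetI A B x g : subgroup A -> subgroup B ->
  (lcoset x A `&` B) g -> lcoset x A `&` B = lcoset g (A `&` B).
Proof.
move=> sA sB [xAg Bg]; rewrite (lcoset_eq sA xAg).
have gBE : lcoset g B = B by rewrite -[RHS]lcoset1; apply/esym/lcoset_eq; rewrite ?lcoset1.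
rewrite -{1}gBE.
apply/seteqP; split=> w; first by move=> [/lcosetP gAw /lcosetP gBw]; apply/lcosetP.
by move=> /lcosetP[gAw gBw]; split; apply/lcosetP.
Qed.

Variable R : realType.

Local Notation bounded := (@Defs.bounded_fun G R).

Lemma indic_ge0 (A : set G) y : 0 <= \1_A y :> R.
Proof. by rewrite indicE ler0n. Qed.

Lemma indic_le1 (A : set G) y : \1_A y <= 1 :> R.
Proof. by rewrite indicE lern1 leq_b1. Qed.

Lemma indic_mem (A : set G) y : A y -> \1_A y = 1 :> R.
Proof. by move=> Ay; rewrite indicE mem_set. Qed.

Lemma indic_nmem (A : set G) y : ~ A y -> \1_A y = 0 :> R.
Proof. by move=> NAy; rewrite indicE memNset. Qed.

Lemma le_indic (A B : set G) y : A `<=` B -> \1_A y <= \1_B y :> R.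
Proof.
move=> AB; rewrite !indicE; case: (boolP (y \in A)) => [/set_mem/AB By|_].
  by rewrite mem_set.
exact: ler0n.
Qed.

Lemma indic_lcoset x H y : \1_(lcoset x H) y = \1_H (inv x *g y) :> R.
Proof.
rewrite !indicE (_ : (y \in lcoset x H) = (inv x *g y \in H)) //.
by apply/idP/idP => /set_mem/lcosetP/mem_set.
Qed.

Lemma sum_lcosets_mul_indic H (cs : seq (set G)) (F : set G -> R) y :
  subgroup H -> uniq cs -> {subset cs <= lcosets H} ->
  \sum_(c <- cs) F c * \1_c y = if lcoset y H \in cs then F (lcoset y H) else 0.
Proof.
move=> sH ucs csH.
have termE c : c \in cs ->
    F c * \1_c y = if c == lcoset y H then F (lcoset y H) else 0.
  move=> /csH/set_mem[x _ <-]; rewrite indicE.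
  case: (boolP (y \in _)) => [/set_mem xHy|yNxH].
    by rewrite (lcoset_eq sH xHy) eqxx mulr1.
  case: eqP => [xHE|]; last by rewrite mulr0.
  by move: yNxH; rewrite xHE (mem_set (lcoset_refl y sH)).
rewrite (eq_big_seq _ termE); case: ifP => yHcs.
  rewrite (bigD1_seq _ yHcs ucs) /= eqxx big1 ?addr0 // => c.
  by move=> /negbTE ->.
by rewrite big1_seq // => c /andP[_ ccs]; case: eqP => // cE; rewrite -cE ccs in yHcs.
Qed.

Lemma bounded_cst (c : R) : bounded (fun _ => c).
Proof. by exists `|c|. Qed.

Lemma bounded_indic A : bounded \1_A.
Proof. by exists 1 => y; rewrite ger0_norm ?indic_ge0 ?indic_le1. Qed.

Local Hint Resolve bounded_cst bounded_indic : core.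

Lemma bounded_lin (f g : G -> R) a b : bounded f -> bounded g ->
  bounded (fun x => a * f x + b * g x).
Proof.
move=> [C fC] [D gD]; exists (`|a| * C + `|b| * D) => x.
by rewrite (le_trans (ler_normD _ _)) // !normrM lerD // ler_wpM2l.
Qed.

Lemma boundedZ (f : G -> R) a : bounded f -> bounded (fun x => a * f x).
Proof.
move=> bf; have := bounded_lin a 0 bf bf.
by congr bounded; apply/funext => x; rewrite mul0r addr0.
Qed.

Lemma bounded_sum (T : Type) (s : seq T) (F : T -> G -> R) :
  (forall i, bounded (F i)) -> bounded (fun x => \sum_(i <- s) F i x).
Proof.
move=> bF; elim: s => [|i s IHs]; first by exists 0 => x; rewrite big_nil normr0.
have := bounded_lin 1 1 (bF i) IHs.
by congr bounded; apply/funext => x; rewrite big_cons !mul1r.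
Qed.

Definition disjoint_translates (X : set G) (gs : seq G) : Prop :=
  forall y, \sum_(h <- gs) \1_(lcoset h X) y <= 1 :> R.

Lemma maximal_disjoint_translates_cover X gs g :
  disjoint_translates X gs -> ~ disjoint_translates X (g :: gs) ->
  exists2 h, h \in gs & exists x x', [/\ X x, X x' & inv h *g g = x' *g inv x].
Proof.
move=> gsX /existsNP[y]; rewrite big_cons => /negP; rewrite -ltNge => y_twice.
have gXy : lcoset g X y.
  apply: contrapT => NgXy; move: y_twice; rewrite indic_nmem // add0r.
  by rewrite ltNge gsX.
have [h hgs hXy] : exists2 h, h \in gs & lcoset h X y.
  apply: contrapT => NhXy; move: y_twice; rewrite big1_seq ?addr0 => [|h /= hgs].
    by rewrite ltNge indic_le1.
  by rewrite indic_nmem // => hXy; apply: NhXy; exists h.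
exists h => //; exists (inv g *g y), (inv h *g y); split; [exact/lcosetP|exact/lcosetP|].
by rewrite invMg invgK mulgA mulgK.
Qed.

(** * Left-invariant means *)

Local Notation mean := (@is_left_invariant_mean G mul R).

Section Mean.
Variable m : (G -> R) -> R.
Hypothesis meanm : mean m.

Lemma mean_lin (f g : G -> R) a b : bounded f -> bounded g ->
  m (fun x => a * f x + b * g x) = a * m f + b * m g.
Proof. by case: meanm => lin _ _ _; apply: lin. Qed.

Lemma mean_ge0 f : bounded f -> (forall x, 0 <= f x) -> 0 <= m f.
Proof. by case: meanm => _ pos _ _; apply: pos. Qed.

Lemma mean1 : m (fun _ => 1) = 1.
Proof. by case: meanm. Qed.

Lemma mean_translate f g : bounded f -> m (fun x => f (g *g x)) = m f.
Proof. by case: meanm => _ _ _ inv_m; apply: inv_m. Qed.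

Lemma meanD f g : bounded f -> bounded g -> m (fun x => f x + g x) = m f + m g.
Proof.
move=> bf bg; rewrite -[m f]mul1r -[m g]mul1r -mean_lin //.
by congr m; apply/funext => x; rewrite !mul1r.
Qed.

Lemma meanZ f a : bounded f -> m (fun x => a * f x) = a * m f.
Proof.
move=> bf; rewrite -[RHS]addr0 -(mul0r (m f)) -mean_lin //.
by congr m; apply/funext => x; rewrite mul0r addr0.
Qed.

Lemma mean_cst c : m (fun _ => c) = c.
Proof.
rewrite -[RHS](mulr1 c) -mean1 -meanZ //.
by congr m; apply/funext => x; rewrite mulr1.
Qed.

Lemma mean_le f g : bounded f -> bounded g -> (forall x, f x <= g x) -> m f <= m g.
Proof.
move=> bf bg fg; rewrite -subr_ge0 -[m g]mul1r -mulN1r -mean_lin //.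
by apply: mean_ge0 (bounded_lin _ _ bg bf) _ => x; rewrite mul1r mulN1r subr_ge0.
Qed.

Lemma mean_sum (T : Type) (s : seq T) (F : T -> G -> R) :
  (forall i, bounded (F i)) -> m (fun x => \sum_(i <- s) F i x) = \sum_(i <- s) m (F i).
Proof.
move=> bF; elim: s => [|i s IHs].
  rewrite big_nil -[RHS](mean_cst 0).
  by congr m; apply/funext => x; rewrite big_nil.
rewrite big_cons -IHs -meanD; [|exact: bF|exact: bounded_sum].
by congr m; apply/funext => x; rewrite big_cons.
Qed.

Lemma mean_indic_ge0 A : 0 <= m \1_A.
Proof. by apply: mean_ge0 (bounded_indic A) _ => y; exact: indic_ge0. Qed.

Lemma mean_indic_lcoset x H : m \1_(lcoset x H) = m \1_H.
Proof.
rewrite -(mean_translate (inv x) (bounded_indic H)); congr m; apply/funext => y.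
exact: indic_lcoset.
Qed.

Lemma mean_indic_ge_superlevel (f : G -> R) (t : R) : bounded f ->
  (forall x, 0 <= f x) -> t * m \1_[set x | t <= f x] <= m f.
Proof.
move=> bf f0; rewrite -meanZ //; apply: mean_le (boundedZ _ (bounded_indic _)) bf _ => x.
have [tfx|Ntfx] := pselect (t <= f x); first by rewrite indic_mem ?mulr1.
by rewrite indic_nmem ?mulr0.
Qed.

Lemma mean_le_superlevel (f : G -> R) (t : R) : 0 <= t -> bounded f ->
  (forall x, f x <= 1) -> m f <= m \1_[set x | t <= f x] + t.
Proof.
move=> t0 bf f1; set S := [set x | t <= f x].
have := @mean_le f (fun x => 1 * \1_S x + t * 1) bf
  (bounded_lin _ _ (bounded_indic S) (bounded_cst 1)).
rewrite mean_lin // mean1 mul1r mulr1; apply=> x /=; rewrite mul1r.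
have [Sx|NSx] := pselect (S x); first by rewrite indic_mem // (le_trans (f1 x)) ?lerDl.
by rewrite indic_nmem // add0r ltW // ltNge; apply/negP.
Qed.

Lemma mean_sum_lcosets_indic H (cs : seq (set G)) : {subset cs <= lcosets H} ->
  m (fun y => \sum_(c <- cs) \1_c y) = m \1_H *+ size cs.
Proof.
move=> csH; rewrite mean_sum // -sumr_const_seq !big_seq.
by apply: eq_bigr => c /csH/set_mem[x _ <-]; rewrite mean_indic_lcoset.
Qed.

Lemma sum_lcosets_indic H (cs : seq (set G)) y : subgroup H -> uniq cs ->
  {subset cs <= lcosets H} -> \sum_(c <- cs) \1_c y = (lcoset y H \in cs)%:R :> R.
Proof.
move=> sH ucs csH; under eq_bigr do rewrite -[\1_ _ _]mul1r.
by rewrite (sum_lcosets_mul_indic (fun=> 1) y sH ucs csH); case: ifP.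
Qed.

Lemma mean_indic_finite_index H : subgroup H -> finite_set (lcosets H) ->
  m \1_H *+ #|` fset_set (lcosets H)| = 1.
Proof.
move=> sH finH; have csH : {subset fset_set (lcosets H) <= lcosets H}.
  by move=> c; rewrite in_fset_set.
rewrite -mean_sum_lcosets_indic // -[RHS]mean1; congr m; apply/funext => y.
by rewrite (sum_lcosets_indic _ sH) ?fset_uniq // in_fset_set // mem_set //; exists y.
Qed.

Lemma mean_indic_lcosets_le1 H (cs : seq (set G)) : subgroup H -> uniq cs ->
  {subset cs <= lcosets H} -> m \1_H *+ size cs <= 1.
Proof.
move=> sH ucs csH; rewrite -mean_sum_lcosets_indic // -mean1.
apply: mean_le => [||y]; [exact: bounded_sum|exact: bounded_cst|].
by rewrite (sum_lcosets_indic _ sH) // lern1 leq_b1.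
Qed.

Lemma mean_indic_subgroup H : subgroup H -> m \1_H = inv_index mul R H.
Proof.
move=> sH; rewrite /inv_index; case: asboolP => [finH|infH].
  have mHk := mean_indic_finite_index sH finH; rewrite -mulr_natr in mHk.
  set k := _%:R in mHk *; have k0 : k != 0.
    by apply/eqP => k0; move: mHk; rewrite k0 mulr0 => /eqP; rewrite eq_sym oner_eq0.
  by apply: (mulIf k0); rewrite mHk mulVf.
apply/eqP; rewrite eq_le mean_indic_ge0 andbT leNgt; apply/negP => mH0.
have [B BH kB] := infinite_set_fset (Num.truncn (m \1_H)^-1).+1 infH.
have := mean_indic_lcosets_le1 sH (fset_uniq B) (fun c cB => mem_set (BH c cB)).
rewrite -mulr_natr -ler_pdivlMl // mulr1; apply/negP; rewrite -ltNge.
by apply: lt_le_trans (truncnS_gt _) _; rewrite ler_nat.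
Qed.

Lemma mean_indicI_lcoset_le A B x : subgroup A -> subgroup B ->
  m \1_(lcoset x A `&` B) <= m \1_(A `&` B).
Proof.
move=> sA sB; have [[g xABg]|NxAB] := pselect (exists g, (lcoset x A `&` B) g).
  by rewrite (lcosetI sA sB xABg) mean_indic_lcoset.
rewrite (_ : m _ = 0) ?mean_indic_ge0 // -[RHS](mean_cst 0); congr m; apply/funext => y.
by rewrite indic_nmem // => xABy; apply: NxAB; exists y.
Qed.

Lemma mean_indicI_ge A B : subgroup A -> subgroup B ->
  m \1_A * m \1_B <= m \1_(A `&` B).
Proof.
move=> sA sB; rewrite [X in X * _](mean_indic_subgroup sA) /inv_index.
case: asboolP => [finA|_]; last by rewrite mul0r mean_indic_ge0.
set cs := fset_set (lcosets A).
have csA : {subset cs <= lcosets A} by move=> c; rewrite in_fset_set.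
have B_split : \1_B = (fun y => \sum_(c <- cs) \1_(c `&` B) y) :> (G -> R).
  apply/funext => y; under eq_bigr do rewrite indicI /= mulrC.
  rewrite (sum_lcosets_mul_indic (fun=> \1_B y) y sA (fset_uniq _) csA).
  by rewrite in_fset_set // mem_set //; exists y.
have mB_le : m \1_B <= m \1_(A `&` B) *+ size cs.
  rewrite B_split mean_sum // -sumr_const_seq !big_seq.
  by apply: ler_sum => c /csA/set_mem[x _ <-]; exact: mean_indicI_lcoset_le.
have k_gt0 : (0 < #|` cs|)%N.
  rewrite lt0n; apply/eqP => k0; have := mean_indic_finite_index sA finA.
  by rewrite -/cs k0 mulr0n => /eqP; rewrite eq_sym oner_eq0.
by rewrite ler_pdivrMl ?ltr0n // mulr_natl.
Qed.

Lemma mean_sum_translates_indic X (gs : seq G) :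
  m (fun y => \sum_(h <- gs) \1_(lcoset h X) y) = m \1_X *+ size gs.
Proof.
have -> : (fun y => \sum_(h <- gs) \1_(lcoset h X) y) =
    (fun y => \sum_(c <- [seq lcoset h X | h <- gs]) \1_c y) :> (G -> R).
  by apply/funext => y; rewrite big_map.
rewrite (@mean_sum_lcosets_indic X) ?size_map // => c /mapP[h _ ->].
by apply/mem_set; exists h.
Qed.

Lemma mean_disjoint_translates_le1 X gs : disjoint_translates X gs -> m \1_X *+ size gs <= 1.
Proof.
move=> gsX; rewrite -mean_sum_translates_indic -mean1.
by apply: mean_le gsX => //; exact: bounded_sum.
Qed.

Lemma mean_translates_cover X gs : (forall g, exists2 h, h \in gs & lcoset h X g) ->
  1 <= m \1_X *+ size gs.
Proof.
move=> gsX; rewrite -mean_sum_translates_indic -mean1.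
apply: mean_le => [||g]; [exact: bounded_cst|exact: bounded_sum|].
have [h hgs hXg] := gsX g; rewrite (big_rem h hgs) /= indic_mem //.
by rewrite lerDl sumr_ge0 // => i _; exact: indic_ge0.
Qed.

Lemma exists_maximal_disjoint_translates X : 0 < m \1_X ->
  exists gs, disjoint_translates X gs /\ forall g, ~ disjoint_translates X (g :: gs).
Proof.
move=> mX; pose P n := `[< exists gs, size gs = n /\ disjoint_translates X gs >].
have P0 : exists n, P n.
  by exists 0%N; apply/asboolP; exists [::]; split=> // y; rewrite big_nil.
have P_le n : P n -> (n <= Num.truncn (m \1_X)^-1)%N.
  move=> /asboolP[gs [<- /mean_disjoint_translates_le1]].
  rewrite -mulr_natr -ler_pdivlMl // mulr1 => gs_le.
  by rewrite truncn_ge_nat // invr_ge0 ltW.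
have [n /asboolP[gs [gs_n gsX]] n_max] := ex_maxnP P0 P_le.
exists gs; split=> // g ggsX; suff : (n.+1 <= n)%N by rewrite ltnn.
by apply: n_max; apply/asboolP; exists (g :: gs); rewrite /= gs_n.
Qed.

End Mean.

(** * Commuting probability as the mean of x |-> 1/[G:C(x)] *)

Definition cent_density x : R := inv_index mul R (cent x).

Lemma inv_index_ge0 H : 0 <= inv_index mul R H.
Proof. by rewrite /inv_index; case: asboolP => _; rewrite ?invr_ge0. Qed.

Lemma inv_index_le1 H : inv_index mul R H <= 1.
Proof.
rewrite /inv_index; case: asboolP => _ //.
by case: #|` _| => [|k]; rewrite ?invr0 // invf_le1 ?ler1n ?ltr0n.
Qed.

Lemma cent_density_ge0 x : 0 <= cent_density x.
Proof. exact: inv_index_ge0. Qed.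

Lemma cent_density_le1 x : cent_density x <= 1.
Proof. exact: inv_index_le1. Qed.

Lemma bounded_cent_density : bounded cent_density.
Proof. by exists 1 => x; rewrite ger0_norm ?cent_density_ge0 ?cent_density_le1. Qed.

Lemma expect_cent_density_fin_num p : is_prob p -> expect p cent_density \is a fin_num.
Proof.
by move=> probp; apply: (expect_fin_num probp) => x; rewrite cent_density_ge0 cent_density_le1.
Qed.

Lemma dc_meanE m : mean m -> dc_mean mul m = m cent_density.
Proof.
move=> meanm; rewrite /dc_mean; congr m; apply/funext => x.
rewrite /cent_density -(mean_indic_subgroup meanm (cent_subgroup x)).
congr m; apply/funext => y.
by case: asboolP => xy; [rewrite indic_mem | rewrite indic_nmem].
Qed.

Lemma cent_densityM_center x z : center z -> cent_density (x *g z) = cent_density x.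
Proof. by move=> zZ; rewrite /cent_density centM_center. Qed.

Lemma cent_density_mul_le m x x' : mean m ->
  cent_density x * cent_density x' <= cent_density (x' *g inv x).
Proof.
move=> meanm; rewrite /cent_density -!(mean_indic_subgroup meanm (cent_subgroup _)).
apply: le_trans (mean_indicI_ge meanm (cent_subgroup x) (cent_subgroup x')) _.
by apply: (mean_le meanm (bounded_indic _) (bounded_indic _)) => y; apply/le_indic/centI_sub.
Qed.

Lemma mean_cent_density_eq0 m m' : mean m -> mean m' ->
  m cent_density = 0 -> m' cent_density = 0.
Proof.
move=> meanm meanm' m0; apply/eqP; rewrite eq_le.
rewrite (mean_ge0 meanm' bounded_cent_density cent_density_ge0) andbT leNgt.
apply/negP => m'_gt0; pose eps := m' cent_density / 2.
have eps_gt0 : 0 < eps by rewrite divr_gt0.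
pose X := [set x | eps <= cent_density x].
pose Y := [set y | eps * eps <= cent_density y].
have m'X : eps <= m' \1_X.
  have := mean_le_superlevel meanm' (ltW eps_gt0) bounded_cent_density cent_density_le1.
  by rewrite -/X /eps; lra.
have [gs [gsX gs_max]] := exists_maximal_disjoint_translates meanm' (lt_le_trans eps_gt0 m'X).
have gsY g : exists2 h, h \in gs & lcoset h Y g.
  have [h hgs [x [x' [Xx Xx' hgE]]]] := maximal_disjoint_translates_cover gsX (gs_max g).
  exists h => //; apply/lcosetP; rewrite /Y /= hgE.
  exact: le_trans (ler_pM (ltW eps_gt0) (ltW eps_gt0) Xx Xx') (cent_density_mul_le _ _ meanm').
have := mean_translates_cover meanm gsY.
have := mean_indic_ge_superlevel meanm (eps * eps) bounded_cent_density cent_density_ge0.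
rewrite -/Y m0 pmulr_rle0 ?mulr_gt0 // => mY_le0.
have -> : m \1_Y = 0 by apply/le_anti; rewrite mY_le0 (mean_indic_ge0 meanm).
by rewrite mul0rn ler10.
Qed.

Lemma cent_density_noncentral x : ~ center x -> cent_density x <= 1 / 2.
Proof.
move=> /existsNP[y Nxy]; rewrite /cent_density /inv_index.
case: asboolP => [fin|_]; last by rewrite divr_ge0 ?ler01 ?ler0n.
have csub : ([fset cent x; lcoset y (cent x)] `<=` fset_set (lcosets (cent x)))%fset.
  apply/fsubsetP => c; rewrite !inE in_fset_set // => /orP[]/eqP->; apply/mem_set.
    by exists one; rewrite ?lcoset1.
  by exists y.
have cNy : cent x != lcoset y (cent x).
  apply/eqP => cE; have : cent x y by rewrite cE; exact/lcoset_refl/cent_subgroup.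
  exact: Nxy.
have := fsubset_leq_card csub; rewrite cardfs2 cNy => two_le.
by rewrite div1r lef_pV2 ?posrE ?ltr0n ?ler_nat // (leq_trans _ two_le).
Qed.

Lemma cent_density_le_half x : cent_density x <= 1 / 2 + 1 / 2 * \1_center x.
Proof.
have [xZ|NxZ] := pselect (center x).
  by rewrite indic_mem // (le_trans (cent_density_le1 x)) //; lra.
by rewrite indic_nmem // mulr0 addr0 cent_density_noncentral.
Qed.

Lemma center_finite_index_of_mean m : mean m -> 1 / 2 < m cent_density ->
  finite_set (lcosets center).
Proof.
move=> meanm half_lt; apply: contrapT => infZ.
have := mean_le meanm bounded_cent_density
  (bounded_lin (1 / 2) (1 / 2) (bounded_cst 1) (bounded_indic center)).
rewrite (mean_lin meanm) // (mean1 meanm) (mean_indic_subgroup meanm center_subgroup).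
rewrite /inv_index asboolF //.
have le_half x : cent_density x <= 1 / 2 * 1 + 1 / 2 * \1_center x.
  by rewrite mulr1 cent_density_le_half.
by move=> /(_ le_half); lra.
Qed.

Definition center_cosets : seq (set G) := fset_set (lcosets center).

Definition coset_rep (c : set G) : G := xget one [set x | c = lcoset x center].

Definition center_avg : R :=
  \sum_(c <- center_cosets) cent_density (coset_rep c) * inv_index mul R center.

Lemma coset_repE c : lcosets center c -> c = lcoset (coset_rep c) center.
Proof.
case=> x _ <-.
by apply: (@xgetPex _ one [set x' | lcoset x center = lcoset x' center]); exists x.
Qed.

Lemma center_cosets_sub : {subset center_cosets <= lcosets center}.
Proof.
move=> c; have [fin|infZ] := pselect (finite_set (lcosets center)).
  by rewrite in_fset_set.
by rewrite /center_cosets /fset_set; case: pselect.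
Qed.

Lemma cent_density_center_cosetsE : finite_set (lcosets center) ->
  cent_density = fun y => \sum_(c <- center_cosets) cent_density (coset_rep c) * \1_c y.
Proof.
move=> fin; apply/funext => y.
rewrite (sum_lcosets_mul_indic _ y center_subgroup (fset_uniq _) center_cosets_sub).
rewrite in_fset_set ?mem_set //; last by exists y.
have yZ : lcosets center (lcoset y center) by exists y.
have := lcoset_refl y center_subgroup; rewrite [X in X y](coset_repE yZ) => /lcosetP repZ.
by rewrite -{1}(mulKVg (coset_rep (lcoset y center)) y) cent_densityM_center.
Qed.

Lemma mean_cent_density_finite_center m : mean m -> finite_set (lcosets center) ->
  m cent_density = center_avg.
Proof.
move=> meanm fin; rewrite {1}(cent_density_center_cosetsE fin) (mean_sum meanm) => [|c].
  rewrite /center_avg !big_seq; apply: eq_bigr => c /center_cosets_sub/set_mem cZ.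
  rewrite (meanZ meanm) // (coset_repE cZ) (mean_indic_lcoset meanm).
  by rewrite (mean_indic_subgroup meanm center_subgroup) -(coset_repE cZ).
exact: boundedZ.
Qed.

(** * Sequences measuring index uniformly *)

Local Notation comm_mass := (comm_mass mul).

Lemma comm_massE (M : nat -> G -> R) n : is_prob (M n) ->
  comm_mass M n = expect (M n) (fun x => fine (pmeas (M n) (cent x))).
Proof.
move=> probM; rewrite /comm_mass.
have -> : [set z : G * G | z.1 *g z.2 = z.2 *g z.1] = [set: G] `*`` cent.
  by apply/seteqP; split=> z /=; [split|case].
rewrite -(esum_esum (a := fun x y => (M n x * M n y)%:E)) => [|x y _ _]; last first.
  by rewrite lee_fin mulr_ge0 ?(prob_ge0 probM).
rewrite /expect; apply: eq_esum => x _.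
rewrite EFinM fineK ?(pmeas_fin_num probM) // /pmeas -ge0_esumZl ?(prob_ge0 probM) //.
by move=> y _; rewrite lee_fin (prob_ge0 probM).
Qed.

Lemma comm_mass_fin_num (M : nat -> G -> R) n : is_prob (M n) -> comm_mass M n \is a fin_num.
Proof.
move=> probM; rewrite (comm_massE probM).
by apply: (expect_fin_num probM) => x; exact: fine_pmeas01.
Qed.

Definition approximates_index (p : G -> R) (e : R) : Prop :=
  forall x H, subgroup H -> `|fine (pmeas p (lcoset x H)) - inv_index mul R H| < e.

Lemma comm_mass_near_expect (M : nat -> G -> R) n e :
  is_prob (M n) -> approximates_index (M n) e ->
  `|fine (comm_mass M n) - fine (expect (M n) cent_density)| <= e.
Proof.
move=> probM Me; have e0 : 0 <= e.
  by apply/ltW/(le_lt_trans _ (Me one center center_subgroup)).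
have centMe x : `|fine (pmeas (M n) (cent x)) - cent_density x| < e.
  by have := Me one (cent x) (cent_subgroup x); rewrite lcoset1.
have fin_cd := expect_cent_density_fin_num probM.
have fin_cm := comm_mass_fin_num probM.
have cm_le : (comm_mass M n <= expect (M n) cent_density + e%:E)%E.
  rewrite (comm_massE probM) -(expect_cst probM e0) -expectD // => [|x]; last first.
    exact: cent_density_ge0.
  apply: (le_expect probM) => x; have /andP[-> _] := fine_pmeas01 probM (cent x).
  by have := centMe x; rewrite ltr_norml => /andP[]; lra.
have cd_le : (expect (M n) cent_density <= comm_mass M n + e%:E)%E.
  rewrite (comm_massE probM) -(expect_cst probM e0) -expectD // => [|x]; last first.
    by have /andP[] := fine_pmeas01 probM (cent x).
  apply: (le_expect probM) => x; rewrite cent_density_ge0 /=.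
  by have := centMe x; rewrite ltr_norml => /andP[]; lra.
move: cm_le cd_le; rewrite -(fineK fin_cm) -(fineK fin_cd) -!EFinD !lee_fin !fineK //.
by rewrite ler_norml => ? ?; apply/andP; split; lra.
Qed.

Lemma expect_cent_density_near_center_avg p e : is_prob p ->
  finite_set (lcosets center) -> approximates_index p e ->
  `|fine (expect p cent_density) - center_avg| <= e *+ size center_cosets.
Proof.
move=> probp fin pe.
have -> : expect p cent_density =
    (\sum_(c <- center_cosets) cent_density (coset_rep c) * fine (pmeas p c))%:E.
  rewrite {1}(cent_density_center_cosetsE fin) (expect_sum probp) => [|c x]; last first.
    by rewrite mulr_ge0 ?cent_density_ge0 ?indic_ge0.
  rewrite -sumEFin; apply: eq_bigr => c _.
  rewrite (expectZ probp (cent_density_ge0 _) (indic_ge0 c)).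
  by rewrite expect_indic EFinM fineK // (pmeas_fin_num probp).
rewrite /= /center_avg -sumrB -sumr_const_seq.
apply: le_trans (ler_norm_sum _ _ _) _; rewrite !big_seq; apply: ler_sum.
move=> c /center_cosets_sub/set_mem cZ; rewrite -mulrBr normrM ger0_norm ?cent_density_ge0 //.
rewrite -[leRHS]mul1r ler_pM ?cent_density_ge0 ?cent_density_le1 //.
by rewrite [c in pmeas _ c](coset_repE cZ); apply/ltW/pe/center_subgroup.
Qed.

Lemma expect_cent_density_le_half p : is_prob p ->
  fine (expect p cent_density) <= 1 / 2 + 1 / 2 * fine (pmeas p center).
Proof.
move=> probp; have half0 : 0 <= 1 / 2 :> R by rewrite divr_ge0 ?ler01 ?ler0n.
have fin_cd := expect_cent_density_fin_num probp.
have := @le_expect _ _ _ probp cent_density (fun x => 1 / 2 * 1 + 1 / 2 * \1_center x).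
rewrite (expectD probp (fun=> mulr_ge0 half0 ler01)
  (fun x => mulr_ge0 half0 (indic_ge0 center x))).
rewrite (expect_cst probp (mulr_ge0 half0 ler01)) (expectZ probp half0 (indic_ge0 center)).
rewrite expect_indic -(fineK (pmeas_fin_num probp center)) -(fineK fin_cd) -EFinM -EFinD.
rewrite lee_fin mulr1; apply=> x.
by rewrite cent_density_ge0 cent_density_le_half.
Qed.

Lemma comm_mass_cvg (M : nat -> G -> R) : measures_index_uniformly mul inv one M ->
  finite_set (lcosets center) -> (comm_mass M n @[n --> \oo] --> center_avg%:E)%E.
Proof.
move=> [probM Mcvg] fin; apply: cvg_EFin.
  by apply: filterE => n; exact: comm_mass_fin_num.
apply/cvgrPdist_le => eps eps_gt0; set k := size center_cosets.
pose e := eps / k.+1%:R.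
have e_gt0 : 0 < e by rewrite divr_gt0.
have epsE : eps = e *+ k + e by rewrite -mulrSr -mulr_natr divfK.
apply: filterS (Mcvg e e_gt0) => n Mne; rewrite /= distrC epsE.
apply: le_trans (ler_distD (fine (expect (M n) cent_density)) _ _) _.
rewrite addrC lerD ?comm_mass_near_expect //.
exact: expect_cent_density_near_center_avg (probM n) fin Mne.
Qed.

Lemma center_finite_index_of_seq (M : nat -> G -> R) (alpha : R) :
  measures_index_uniformly mul inv one M ->
  1 / 2 < alpha -> dc_seq mul M = alpha%:E -> finite_set (lcosets center).
Proof.
move=> [probM Mcvg] half_lt dcM; apply: contrapT => infZ.
pose e := (alpha - 1 / 2) / 4.
have e_gt0 : 0 < e by rewrite divr_gt0 // subr_gt0.
suff : (dc_seq mul M <= (1 / 2 + 2 * e)%:E)%E by rewrite dcM lee_fin /e; lra.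
apply: limn_esup_le_near; apply: filterS (Mcvg e e_gt0) => n Mne.
have := comm_mass_near_expect (probM n) Mne; have := expect_cent_density_le_half (probM n).
have := Mne one center center_subgroup.
rewrite lcoset1 /inv_index asboolF // subr0 -(fineK (comm_mass_fin_num (probM n))) lee_fin.
by rewrite !ltr_norml !ler_norml => /andP[? ?] ? /andP[? ?]; lra.
Qed.

End Group.

Unset Implicit Arguments.

Theorem corollary1p20 (R : realType) (G : choiceType)
  (mul : G -> G -> G) (inv : G -> G) (one : G) :
  is_group mul inv one -> countable [set: G] ->
  (* (1) *)
  ((forall m : (G -> R) -> R, is_left_invariant_mean mul m -> dc_mean mul m = 0 ->
     forall m' : (G -> R) -> R, is_left_invariant_mean mul m' -> dc_mean mul m' = 0)
  /\
  (* (2) *)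
   (forall alpha : R, 1 / 2 < alpha ->
     ((exists m : (G -> R) -> R, is_left_invariant_mean mul m /\ dc_mean mul m = alpha)
      \/ (exists M : nat -> G -> R,
            measures_index_uniformly mul inv one M /\ dc_seq mul M = alpha%:E)) ->
     (forall m' : (G -> R) -> R, is_left_invariant_mean mul m' -> dc_mean mul m' = alpha)
     /\ (forall M' : nat -> G -> R, measures_index_uniformly mul inv one M' ->
           dc_seq mul M' = alpha%:E /\ (comm_mass mul M' n @[n --> \oo] --> alpha%:E)%E))).
Proof.
move=> groupG _; split.
  move=> m meanm m0 m' meanm'; rewrite (dc_meanE groupG meanm').
  by apply: (mean_cent_density_eq0 groupG meanm meanm'); rewrite -(dc_meanE groupG meanm).
move=> alpha half_lt dc_alpha.
have finZ : finite_set (lcosets mul (center mul)).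
  case: dc_alpha => [[m [meanm dcm]]|[M [uM dcM]]].
    by apply: (center_finite_index_of_mean groupG meanm); rewrite -(dc_meanE groupG meanm) dcm.
  exact: (center_finite_index_of_seq groupG uM half_lt dcM).
have alphaE : alpha = center_avg mul one R.
  case: dc_alpha => [[m [meanm <-]]|[M [uM dcM]]].
    by rewrite (dc_meanE groupG meanm) (mean_cent_density_finite_center groupG meanm finZ).
  have [_ ] := cvg_limn_einf_sup (comm_mass_cvg groupG uM finZ).
  by rewrite -/(dc_seq mul M) dcM => -[].
rewrite alphaE; split=> [m' meanm'|M' uM'].
  by rewrite (dc_meanE groupG meanm') (mean_cent_density_finite_center groupG meanm' finZ).
have cvgM' := comm_mass_cvg groupG uM' finZ.
by split=> //; exact: (cvg_limn_einf_sup cvgM').2.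
Qed.
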